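(* Let $(m_{1},\ldots,m_{\mu})$ be a $\mu$-tuple of even integers. For any unoriented $\mu$-component welded link $L$, the welded link $L(m_{1},\ldots,m_{\mu})$ can be deformed into the $\mu$-component trivial link by unoriented $V^{2}$-moves (together with welded Reidemeister moves).
   Context: An unoriented virtual link diagram is the image of an immersion of finitely many circles in the plane with transverse double points, each a classical crossing (with over/under information) or a virtual crossing. Welded Reidemeister moves are R1–R3, the virtual moves VR1–VR4, and the OC move (a strand passing over two strands at classical crossings may slide across a virtual crossing of those two strands); an unoriented welded link is an equivalence class of unoriented diagrams under these moves. The trivial $\mu$-component link is represented by $\mu$ disjoint circles without crossings. Multiplexing: let $D=\bigcup_{i=1}^{\mu}D_i$ be an unoriented $\mu$-component diagram and $(m_1,\dots,m_\mu)\in\mathbb{Z}^\mu$. View a classical crossing whose over-strand belongs to $D_j$ locally as a $2$-braid generator $\sigma$. Its multiplexing associated with $m_j$ replaces $\sigma$ by the word $\sigma\tau\sigma\tau\cdots\tau\sigma$ with $m_j$ letters $\sigma$ and $m_j-1$ virtual crossings $\tau$ if $m_j>0$; by a single virtual crossing $\tau$ if $m_j=0$; and by $\sigma^{-1}\tau\sigma^{-1}\cdots\tau\sigma^{-1}$ with $|m_j|$ letters $\sigma^{-1}$ (the crossing with over/under switched) if $m_j<0$. $D(m_1,\dots,m_\mu)$ is obtained by doing this at every classical crossing of $D$; its welded class depends only on the welded class $L$ of $D$ and is denoted $L(m_1,\dots,m_\mu)$. The unoriented $V^{2}$-move: inside a disk with two arcs $a,b$, replace parallel arcs without crossings by the tangle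 $(\sigma\tau)^{2}$, where $\sigma$ is a classical crossing with $b$ over $a$ and $\tau$ a virtual crossing, or the reverse; orientations disregarded. *)

From mathcomp Require Import all_boot all_order all_algebra.
From Stdlib Require Import Relations.
Set Implicit Arguments. Unset Strict Implicit. Unset Printing Implicit Defensive.
Import GRing.Theory Num.Theory.
Local Open Scope ring_scope.

(* An endpoint of an arrow (= classical crossing) in a Gauss diagram:
   (label, is_over, sign).  is_over = true : the endpoint lies on the over
   strand (tail of the arrow), false : on the under strand (head).
   sign = true : positive crossing (w.r.t. the current orientations).
   Both endpoints of an arrow carry its sign. *)
Definition label := seq nat.
Definition letter := (label * bool * bool)%type.
Definition lbl (e : letter) : label := e.1.1.
Definition isover (e : letter) : bool := e.1.2.
Definition sgn (e : letter) : bool := e.2.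

(* A mu-component (oriented) Gauss diagram: one cyclic word per component
   D_i (i < mu = size D), read along the orientation of the component.
   Virtual crossings are invisible in Gauss diagrams, so diagrams modulo
   the virtual moves VR1-VR4 are Gauss diagrams modulo cyclic rotation of
   the component words (rotation is a move below). *)
Definition diagram := seq (seq letter).

Definition wf (D : diagram) : Prop :=
  forall l : label,
    count (fun e => lbl e == l) (flatten D) = 0%N \/
    exists s : bool,
      [/\ count (fun e => lbl e == l) (flatten D) = 2%N,
          count (pred1 (l, true, s)) (flatten D) = 1%N &
          count (pred1 (l, false, s)) (flatten D) = 1%N].

Definition trivial_diagram (mu : nat) : diagram := nseq mu [::].

(* A context is a diagram in which some letters are replaced by numbered
   holes (inr k).  Filling the holes by words gives a diagram; a local move
   replaces the words filling the holes by other words. *)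
Definition ctx := seq (seq (letter + nat)).

Definition fill (C : ctx) (f : nat -> seq letter) : diagram :=
  map (fun w => flatten (map (fun x => match x with
                                      | inl e => [:: e]
                                      | inr k => f k end) w)) C.

Definition holes (C : ctx) (n : nat) : Prop :=
  forall k : nat, count (pred1 (inr k)) (flatten C) = (k < n)%N.

Definition R1_pat (n : nat) (f g : nat -> seq letter) : Prop :=
  n = 1%N /\ f 0%N = [::] /\
  exists (l : label) (s : bool),
    g 0%N = [:: (l, true, s); (l, false, s)] \/
    g 0%N = [:: (l, false, s); (l, true, s)].

(* R2: two arrows with the same over strand and opposite signs, tails
   adjacent on one strand and heads adjacent on another strand, in either
   relative order (the two orientation cases of R2). *)
Definition R2_pat (n : nat) (f g : nat -> seq letter) : Prop :=
  n = 2%N /\ f 0%N = [::] /\ f 1%N = [::] /\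
  exists (l1 l2 : label) (s : bool),
    g 0%N = [:: (l1, true, s); (l2, true, ~~ s)] /\
    (g 1%N = [:: (l1, false, s); (l2, false, ~~ s)] \/
     g 1%N = [:: (l2, false, ~~ s); (l1, false, s)]).

(* R3: three strands T (top), M (middle), B (bottom) with arrows
   x : T -> M, y : T -> B, z : M -> B, the two endpoints on each strand being
   adjacent.  a (resp. b, c) says whether x comes before y on T (resp. x
   before z on M, y before z on B).  The sign condition below is exactly the set of
   (order, sign) data realised by three strands in general position forming
   a triangle (computed from the straight-line model). *)
Definition R3_word (x y z : label) (ex ey ez : bool) (a b c : bool)
  (k : nat) : seq letter :=
  match k with
  | 0%N => if a then [:: (x, true, ex); (y, true, ey)]
           else [:: (y, true, ey); (x, true, ex)]
  | 1%N => if b then [:: (x, false, ex); (z, true, ez)]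
           else [:: (z, true, ez); (x, false, ex)]
  | _ => if c then [:: (y, false, ey); (z, false, ez)]
         else [:: (z, false, ez); (y, false, ey)]
  end.

Definition R3_pat (n : nat) (f g : nat -> seq letter) : Prop :=
  n = 3%N /\
  exists (x y z : label) (ex ey ez a b c : bool),
    [/\ (ex == ey) = (b == c), (ey == ez) = (a == b),
        forall k, (k < 3)%N -> f k = R3_word x y z ex ey ez a b c k &
        forall k, (k < 3)%N -> g k = R3_word x y z ex ey ez (~~ a) (~~ b) (~~ c) k].

Definition OC_pat (n : nat) (f g : nat -> seq letter) : Prop :=
  n = 1%N /\
  exists (l1 l2 : label) (s1 s2 : bool),
    f 0%N = [:: (l1, true, s1); (l2, true, s2)] /\
    g 0%N = [:: (l2, true, s2); (l1, true, s1)].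

(* unoriented V^2-move: the tangle (sigma tau)^2 = two arrows with the same
   direction and the same sign, tails adjacent on one strand, heads adjacent
   on another strand; since orientations are disregarded, both relative
   orders occur. *)
Definition V2_pat (n : nat) (f g : nat -> seq letter) : Prop :=
  n = 2%N /\ f 0%N = [::] /\ f 1%N = [::] /\
  exists (l1 l2 : label) (s : bool),
    g 0%N = [:: (l1, true, s); (l2, true, s)] /\
    (g 1%N = [:: (l1, false, s); (l2, false, s)] \/
     g 1%N = [:: (l2, false, s); (l1, false, s)]).

Definition local_step (P : nat -> (nat -> seq letter) -> (nat -> seq letter) -> Prop)
  (D D' : diagram) : Prop :=
  exists (C : ctx) (n : nat) (f g : nat -> seq letter),
    [/\ holes C n, P n f g, D = fill C f & D' = fill C g].

Definition rotate_comp (D : diagram) (i k : nat) : diagram :=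
  set_nth [::] D i (rot k (nth [::] D i)).

(* reversing the orientation of component i: its word is reversed and the
   crossings between D_i and another component change sign (self-crossings
   of D_i keep their sign).  This makes the theory unoriented. *)
Definition reverse_comp (D : diagram) (i : nat) : diagram :=
  let w := nth [::] D i in
  let mixed (l : label) := count (fun e => lbl e == l) w == 1%N in
  let fl (e : letter) : letter :=
    if mixed (lbl e) then (lbl e, isover e, ~~ sgn e) else e in
  [seq map fl (if j == i then rev (nth [::] D j) else nth [::] D j)
  | j <- iota 0 (size D)].

Inductive welded_step (D D' : diagram) : Prop :=
  | ws_R1 of wf D & wf D' & local_step R1_pat D D'
  | ws_R2 of wf D & wf D' & local_step R2_pat D D'
  | ws_R3 of wf D & wf D' & local_step R3_pat D D'
  | ws_OC of wf D & wf D' & local_step OC_pat D D'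
  | ws_rot (i k : nat) of wf D & (i < size D)%N & D' = rotate_comp D i k
  | ws_rev (i : nat) of wf D & (i < size D)%N & D' = reverse_comp D i.

Inductive V2_welded_step (D D' : diagram) : Prop :=
  | vs_welded of welded_step D D'
  | vs_V2 of wf D & wf D' & local_step V2_pat D D'.

Definition V2_welded_equiv : relation diagram :=
  clos_refl_sym_trans diagram V2_welded_step.

Definition over_comp (D : diagram) (l : label) : nat :=
  find (fun w => has (fun e => (lbl e == l) && isover e) w) D.

(* An arrow (crossing) whose over strand lies on D_j is replaced by the
   Gauss diagram of sigma tau sigma ... tau sigma (m_j letters sigma):
   m_j parallel copies of the arrow with the same sign, endpoints consecutive
   on both strands (copy k of arrow l gets label k :: l); for m_j = 0 it is
   removed (a virtual crossing); for m_j < 0 it is replaced by |m_j| copies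
   of the switched crossing sigma^-1 (direction reversed, sign changed). *)
Definition multiplex_letter (D : diagram) (m : seq int) (e : letter)
  : seq letter :=
  let mj := nth 0 m (over_comp D (lbl e)) in
  if 0 <= mj then
    [seq (k :: lbl e, isover e, sgn e) | k <- iota 0 `|mj|%N]
  else
    [seq (k :: lbl e, ~~ isover e, ~~ sgn e) | k <- iota 0 `|mj|%N].

Definition multiplex (D : diagram) (m : seq int) : diagram :=
  [seq flatten [seq multiplex_letter D m e | e <- w] | w <- D].

From mathcomp Require Import all_boot all_order all_algebra.
From Stdlib Require Import Relations.
From mathcomp Require Import zify.

Set Implicit Arguments. Unset Strict Implicit. Unset Printing Implicit Defensive.

(* When every m_j is even, multiplexing replaces each arrow of the Gauss diagram
   by an even number of parallel copies (all switched when m_j < 0), consecutive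
   on both strands.  Two adjacent copies form the tangle (sigma tau)^2, so a
   V^2-move deletes them; removing copies pair by pair ends at a diagram without
   arrows, which is the trivial link. *)

Lemma count_flatten_map (T U : Type) (a : pred U) (F : T -> seq U) (P : pred T)
    (s : seq T) :
  (forall x, count a (F x) = P x) -> count a (flatten (map F s)) = count P s.
Proof. by move=> FP; elim: s => //= x s IH; rewrite count_cat IH FP. Qed.

Lemma flatten_map_flatten (T U : Type) (F : T -> seq U) (ss : seq (seq T)) :
  flatten [seq flatten (map F s) | s <- ss] = flatten (map F (flatten ss)).
Proof. by elim: ss => //= s ss IH; rewrite map_cat flatten_cat IH. Qed.

Lemma count_iota_eq_andb k n (b : bool) :
  count (fun i => (i == k) && b) (iota 0 n) = b && (k < n).
Proof.
case: b => /=; last by rewrite (eq_count (a2 := pred0)) ?count_pred0 // => i; rewrite andbF.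
rewrite (eq_count (a2 := pred1 k)) ?count_uniq_mem ?iota_uniq ?mem_iota //.
by move=> i; rewrite andbT.
Qed.

Lemma leq_count3 (T : Type) (a1 a2 a3 b : pred T) (s : seq T) :
  (forall x, a1 x + a2 x + a3 x <= b x) ->
  count a1 s + count a2 s + count a3 s <= count b s.
Proof. by move=> le_ab; elim: s => //= x s IH; move: (le_ab x); lia. Qed.

Lemma count_endpoints_sgn (w : seq letter) (l : label) (s : bool) :
  count (fun e => lbl e == l) w = 2 -> count (pred1 (l, true, s)) w = 1 ->
  count (pred1 (l, false, s)) w = 1 -> {in w, forall e, lbl e = l -> sgn e = s}.
Proof.
move=> count_l count_tail count_head [[l' o] s'] e_w; rewrite /lbl /sgn /= => El.
subst l'; apply/eqP; apply: contraT => neq_s.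
have pos_e : 0 < @count letter (pred1 (l, o, s')) w by rewrite -has_count has_pred1.
have le_l : forall e,
    pred1 (l, true, s) e + pred1 (l, false, s) e + pred1 (l, o, s') e <= (lbl e == l).
  move=> [[l'' o''] s'']; rewrite /lbl /pred1 /= !xpair_eqE; case: (l'' == l) => //=.
  by move: neq_s; case: (o) (o'') (s) (s') (s'') => [] [] [] [] [].
have := leq_count3 w le_l; rewrite count_tail count_head count_l; lia.
Qed.

Lemma wf_arrow (D : diagram) (e : letter) :
  wf D -> e \in flatten D ->
  [/\ count (fun x => lbl x == lbl e) (flatten D) = 2,
      count (pred1 (lbl e, true, sgn e)) (flatten D) = 1 &
      count (pred1 (lbl e, false, sgn e)) (flatten D) = 1].
Proof.
move=> wfD e_D; case: (wfD (lbl e)) => [/eqP | [s [count_l count_tail count_head]]].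
  by rewrite -leqn0 leqNgt -has_count; case/negP; apply/hasP; exists e.
by rewrite (count_endpoints_sgn count_l count_tail count_head e_D).
Qed.

Lemma wf_sgn (D : diagram) :
  wf D -> {in flatten D &, forall e e', lbl e' = lbl e -> sgn e' = sgn e}.
Proof.
move=> wfD e e' e_D e'_D El; have [count_l count_tail count_head] := wf_arrow wfD e_D.
exact: count_endpoints_sgn count_l count_tail count_head e' e'_D El.
Qed.

Definition pair_multiplex_letter (c : label -> nat) (d : label -> bool) (e : letter)
    : seq letter :=
  [seq (k :: lbl e, isover e (+) d (lbl e), sgn e (+) d (lbl e))
  | k <- iota 0 (2 * c (lbl e))].

Definition pair_multiplex (D : diagram) (c : label -> nat) (d : label -> bool)
    : diagram :=
  [seq flatten [seq pair_multiplex_letter c d e | e <- w] | w <- D].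

Lemma count_lbl_pair_multiplex_letter c d e k l :
  count (fun x => lbl x == k :: l) (pair_multiplex_letter c d e)
  = (lbl e == l) && (k < 2 * c l).
Proof.
rewrite count_map (eq_count (a2 := fun i => (i == k) && (lbl e == l))); last first.
  by move=> i; rewrite /= eqseq_cons.
by case: eqP => [<-|_]; rewrite count_iota_eq_andb.
Qed.

Lemma count_pred1_pair_multiplex_letter c d e k l b s :
  count (pred1 (k :: l, b, s)) (pair_multiplex_letter c d e)
  = (e == (l, b (+) d l, s (+) d l)) && (k < 2 * c l).
Proof.
rewrite count_map
  (eq_count (a2 := fun i => (i == k) && (e == (l, b (+) d l, s (+) d l)))); last first.
  move: e => [[l' o] s'] i; rewrite /lbl /isover /sgn /= !xpair_eqE eqseq_cons -!andbA.
  by congr (_ && _); case: eqP => //= ->; case: (d l) o b s s' => [] [] [] [] [].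
by case: eqP => [->|_]; rewrite count_iota_eq_andb.
Qed.

Lemma wf_pair_multiplex D c d : wf D -> wf (pair_multiplex D c d).
Proof.
rewrite /pair_multiplex => wfD [|k l].
  left; rewrite flatten_map_flatten (count_flatten_map (P := pred0)) ?count_pred0 // => e.
  by rewrite count_map (eq_count (a2 := pred0)) ?count_pred0.
rewrite flatten_map_flatten.
have count_copies P (a : pred letter) :
    (forall e, count a (pair_multiplex_letter c d e) = P e && (k < 2 * c l)) ->
    count a (flatten (map (pair_multiplex_letter c d) (flatten D)))
    = if k < 2 * c l then count P (flatten D) else 0.
  move=> count_a; rewrite (count_flatten_map _ count_a).
  case: ifP => _; first by apply: eq_count => e; rewrite andbT.
  by rewrite (eq_count (a2 := pred0)) ?count_pred0 // => e; rewrite andbF.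
rewrite (count_copies _ _ (fun e => count_lbl_pair_multiplex_letter c d e k l)).
case: ifP => [lt_k|]; last by left.
case: (wfD l) => [count_l|[s [count_l count_tail count_head]]]; first by left.
have count_endpoint b :
    count (pred1 (k :: l, b, s (+) d l))
      (flatten [seq pair_multiplex_letter c d e | e <- flatten D])
    = count (pred1 (l, b (+) d l, s)) (flatten D).
  rewrite (count_copies _ _ (fun e => count_pred1_pair_multiplex_letter c d e k l b _)).
  by rewrite lt_k addbK.
by right; exists (s (+) d l); rewrite !count_endpoint; case: (d l).
Qed.

Definition decr_at (c : label -> nat) (l0 : label) : label -> nat :=
  fun l => c l - (l == l0).

Lemma pair_multiplex_letter_decr_at c d e :
  0 < c (lbl e) ->
  pair_multiplex_letter c d e
  = pair_multiplex_letter (decr_at c (lbl e)) d e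
    ++ [seq (k :: lbl e, isover e (+) d (lbl e), sgn e (+) d (lbl e))
       | k <- iota (2 * (c (lbl e)).-1) 2].
Proof.
move=> c_pos; rewrite /pair_multiplex_letter /decr_at eqxx subn1 -map_cat -iotaD.
by congr (map _ (iota _ _)); lia.
Qed.

Lemma pair_multiplex_letter_decr_at_other c d e l0 :
  lbl e != l0 -> pair_multiplex_letter (decr_at c l0) d e = pair_multiplex_letter c d e.
Proof. by move=> ne; rewrite /pair_multiplex_letter /decr_at (negbTE ne) subn0. Qed.

Definition V2_hole (d : label -> bool) (e : letter) : nat :=
  if isover e (+) d (lbl e) then 0 else 1.

(* The last pair of copies of [l0] is cut out at both endpoints of [l0]: hole 0
   receives the two (possibly switched) tails, hole 1 the two heads. *)
Definition pair_multiplex_ctx (D : diagram) (c : label -> nat) (d : label -> bool)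
    (l0 : label) : ctx :=
  [seq flatten [seq [seq inl x | x <- pair_multiplex_letter (decr_at c l0) d e]
                    ++ (if lbl e == l0 then [:: inr (V2_hole d e)] else [::])
               | e <- w] | w <- D].

Lemma fill_pair_multiplex_ctx D c d l0 (h : nat -> seq letter) :
  fill (pair_multiplex_ctx D c d l0) h
  = [seq flatten [seq pair_multiplex_letter (decr_at c l0) d e
                      ++ (if lbl e == l0 then h (V2_hole d e) else [::]) | e <- w]
    | w <- D].
Proof.
rewrite /fill -map_comp; apply: eq_map => w /=.
rewrite -flatten_map_flatten -map_comp; congr flatten; apply: eq_map => e /=.
rewrite map_cat flatten_cat -map_comp flatten_map1 map_id.
by case: (lbl e == l0); rewrite /= ?cats0.
Qed.

Lemma holes_pair_multiplex_ctx D c d e0 :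
  wf D -> e0 \in flatten D -> holes (pair_multiplex_ctx D c d (lbl e0)) 2.
Proof.
move=> wfD e0_D k; rewrite /pair_multiplex_ctx flatten_map_flatten.
rewrite (count_flatten_map (P := fun e => (lbl e == lbl e0) && (V2_hole d e == k)));
  last first.
  move=> e; rewrite count_cat count_map (eq_count (a2 := pred0)) ?count_pred0 //.
  by case: (lbl e == lbl e0); rewrite /= ?addn0.
have hole_lt2 e : V2_hole d e < 2 by rewrite /V2_hole; case: ifP.
case: (ltnP k 2) => [lt_k2|ge_k2]; last first.
  rewrite (eq_count (a2 := pred0)) ?count_pred0 // => e /=.
  by rewrite andbC; case: eqP => //= hk; move: (hole_lt2 e); rewrite hk ltnNge ge_k2.
have [_ count_tail count_head] := wf_arrow wfD e0_D.
rewrite (@eq_in_count _ _ (pred1 (lbl e0, (k == 0) (+) d (lbl e0), sgn e0))); last first.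
  move=> [[l o] s] e_D; rewrite /= !xpair_eqE /V2_hole /lbl /isover /=.
  case: eqP => //= El; have := wf_sgn wfD e0_D e_D El; rewrite /sgn /= => ->.
  rewrite -El eqxx andbT.
  by case: k lt_k2 => [|[|]] //; case: (o) (d l) => [] [].
by case: k lt_k2 => [|[|]] //; case: (d (lbl e0)).
Qed.

Lemma V2_step_pair_multiplex D c d e0 :
  wf D -> e0 \in flatten D -> 0 < c (lbl e0) ->
  V2_welded_step (pair_multiplex D (decr_at c (lbl e0)) d) (pair_multiplex D c d).
Proof.
move=> wfD e0_D c_pos; set p := 2 * (c (lbl e0)).-1.
set s := sgn e0 (+) d (lbl e0).
pose g k := [seq (i :: lbl e0, k == 0, s) | i <- iota p 2].
apply: vs_V2; [exact: wf_pair_multiplex | exact: wf_pair_multiplex |].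
exists (pair_multiplex_ctx D c d (lbl e0)), 2, (fun=> [::]), g; split.
- exact: holes_pair_multiplex_ctx.
- by do 3 split => //; exists (p :: lbl e0), (p.+1 :: lbl e0), s; split => //; left.
- rewrite fill_pair_multiplex_ctx; apply: eq_map => w; congr flatten.
  by apply: eq_map => e; case: ifP; rewrite cats0.
rewrite fill_pair_multiplex_ctx; apply/eq_in_map => w w_D; congr flatten.
apply/eq_in_map => e e_w; case: (eqVneq (lbl e) (lbl e0)) => [El|ne]; last first.
  by rewrite cats0 pair_multiplex_letter_decr_at_other.
have e_D : e \in flatten D by apply/flattenP; exists w.
rewrite -El pair_multiplex_letter_decr_at El // /g /s /V2_hole.
by rewrite (wf_sgn wfD e0_D e_D El) El; case: ifP.
Qed.

Lemma pair_multiplex_trivial D c d :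
  {in flatten D, forall e, c (lbl e) = 0} ->
  pair_multiplex D c d = trivial_diagram (size D).
Proof.
rewrite /pair_multiplex /trivial_diagram.
elim: D => //= w D IH c0; rewrite IH => [|e e_D]; last by rewrite c0 // mem_cat e_D orbT.
congr (_ :: _); elim: w c0 => //= e w IHw c0.
rewrite /pair_multiplex_letter c0 ?inE ?eqxx //= IHw // => x x_w.
by rewrite c0 //= inE x_w orbT.
Qed.

Definition endpoint_weight (D : diagram) (c : label -> nat) : nat :=
  sumn [seq c (lbl e) | e <- flatten D].

Lemma endpoint_weight_decr_at D c l0 :
  0 < c l0 ->
  endpoint_weight D c
  = endpoint_weight D (decr_at c l0) + count (fun e => lbl e == l0) (flatten D).
Proof.
move=> c_pos; rewrite /endpoint_weight; elim: (flatten D) => //= e s ->.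
by rewrite /decr_at; case: eqP => [->|_] /=; lia.
Qed.

Lemma pair_multiplex_V2_trivial D c d :
  wf D -> V2_welded_equiv (pair_multiplex D c d) (trivial_diagram (size D)).
Proof.
move=> wfD; move: {2}(endpoint_weight D c) (erefl (endpoint_weight D c)) => n.
elim/ltn_ind: n c => n IH c weight_c.
have [/hasP [e0 e0_D c_pos] | /hasPn c0] :=
  boolP (has (fun e => 0 < c (lbl e)) (flatten D)); last first.
  by rewrite pair_multiplex_trivial; [exact: rst_refl | move=> e /c0; case: (c _)].
apply: (rst_trans _ _ _ (pair_multiplex D (decr_at c (lbl e0)) d)).
  exact/rst_sym/rst_step/V2_step_pair_multiplex.
apply: IH _ _ erefl; have [count_l _ _] := wf_arrow wfD e0_D.
by rewrite -weight_c (endpoint_weight_decr_at D c_pos) count_l; lia.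
Qed.

Lemma multiplex_even D m :
  all (fun k : int => (2 %| k)%Z) m ->
  multiplex D m = pair_multiplex D (fun l => `|nth 0%R m (over_comp D l)|%N %/ 2)
                                   (fun l => ~~ (0 <= nth 0%R m (over_comp D l))%R).
Proof.
move=> even_m; apply: eq_map => w; congr flatten; apply: eq_map => e.
rewrite /multiplex_letter /pair_multiplex_letter; set mj := nth 0%R m _.
have even_mj : (2 %| `|mj|%N)%N.
  rewrite /mj; case: (ltnP (over_comp D (lbl e)) (size m)) => [lt_m|ge_m].
    by move/allP: even_m => /(_ _ (mem_nth 0%R lt_m)); rewrite dvdzE.
  by rewrite nth_default.
rewrite mulnC (divnK even_mj).
by case: (0 <= mj)%R; apply: eq_map => k; rewrite ?addbF ?addbT.
Qed.

Theorem proposition6p3 (D : diagram) (m : seq int) :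
  wf D -> size m = size D -> all (fun k : int => (2 %| k)%Z) m ->
  V2_welded_equiv (multiplex D m) (trivial_diagram (size D)).
Proof.
move=> wfD _ even_m; rewrite (multiplex_even D even_m).
exact: pair_multiplex_V2_trivial.
Qed.
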